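(* For any $n\ge 1$, every longest saturated chain from $0^n$ to $12^{n-1}$ in $(\mathsf{Tr}(n),\preccurlyeq)$ has length $2n-1$. Moreover, a triword $u\in\mathsf{Tr}(n)$ belongs to such a longest saturated chain if and only if, whenever $u_i=0$, one has $u_j=0$ for all $j\ge i$.
   Context: A triword of size $n$ is a word $u=u_1\cdots u_n$ with $u_i\in\{0,1,2\}$, $u_1\ne 2$, and such that $u_i=0$ implies $u_j\neq 1$ for all $j>i$; $\mathsf{Tr}(n)$ is their set, ordered componentwise ($u\preccurlyeq v$ iff $u_i\le v_i$ for all $i$); its minimum is $0^n$ and its maximum is $12^{n-1}$. A saturated chain $x_1\lessdot\cdots\lessdot x_r$ (successive covering relations) has length $r-1$. *)

From mathcomp Require Import all_boot.
Set Implicit Arguments. Unset Strict Implicit. Unset Printing Implicit Defensive.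

(* Words of length n over {0,1,2}, positions indexed 0..n-1 (position 0 = u_1). *)
Definition word (n : nat) := {ffun 'I_n -> 'I_3}.

Definition triword n (u : word n) : bool :=
  [forall i : 'I_n, (val i == 0) ==> (val (u i) != 2)] &&
  [forall i : 'I_n, forall j : 'I_n,
     ((val i < val j) && (val (u i) == 0)) ==> (val (u j) != 1)].

Definition wle n (u v : word n) : bool := [forall i, val (u i) <= val (v i)].
Definition wlt n (u v : word n) : bool := wle u v && (u != v).

Definition tr_cover n (u v : word n) : bool :=
  [&& triword u, triword v, wlt u v &
      ~~ [exists w : word n, [&& triword w, wlt u w & wlt w v]]].

Definition tr_bot n : word n := [ffun _ => ord0].
Definition tr_top n : word n :=
  [ffun i : 'I_n => if val i == 0 then inord 1 else inord 2].

(* A saturated chain x_1 <. x_2 <. ... <. x_r from 0^n to 1 2^(n-1) is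
   represented by the sequence s = [x_2; ...; x_r] with x_1 = 0^n;
   its length r-1 is size s; its elements are those of tr_bot n :: s. *)
Definition sat_chain n (s : seq (word n)) : Prop :=
  path (@tr_cover n) (tr_bot n) s /\ last (tr_bot n) s = tr_top n.

Definition longest_sat_chain n (s : seq (word n)) : Prop :=
  sat_chain s /\ forall t : seq (word n), sat_chain t -> size t <= size s.

From mathcomp Require Import all_boot zify.
Set Implicit Arguments. Unset Strict Implicit. Unset Printing Implicit Defensive.

(* The letter sum [wsum] strictly increases along [wlt], so a saturated chain
   from 0^n to 1 2^(n-1) has at most wsum (1 2^(n-1)) = 2n - 1 steps, and a
   chain of that length raises exactly one letter by one at each step.  Along
   such a unit step a pattern "0 at i, 2 at j > i" can only be inherited from
   the previous word: the 0 was a 0, and the 2 was a 1 or a 2, but a triword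
   has no 1 behind a 0.  As 0^n has no 2, no word of a longest chain has a 2
   (nor, being a triword, a 1) behind a 0.  Conversely, between two triwords
   whose zeros form a suffix one can climb by unit steps (turn a 1 into a 2
   where the target has a 2, otherwise turn the first 0 into a 1), so every
   such word lies on a chain of length 2n - 1. *)

Section Triwords.
Variable n : nat.
Implicit Types (u v w x y : word n) (s : seq (word n)).

Definition wsum u := \sum_(i < n) val (u i).

Definition zero_suffix u :=
  forall i j : 'I_n, val (u i) = 0 -> val i <= val j -> val (u j) = 0.

Definition set_letter u (k : 'I_n) (c : 'I_3) : word n :=
  [ffun i => if i == k then c else u i].

Lemma triwordP u : reflect
  ((forall i : 'I_n, val i = 0 -> val (u i) <> 2) /\
   (forall i j : 'I_n, val i < val j -> val (u i) = 0 -> val (u j) <> 1))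
  (triword u).
Proof.
apply: (iffP andP) => [[/forallP head /forallP tail] | [head tail]]; split.
- by move=> i i0; apply/eqP; move: (head i); rewrite i0.
- by move=> i j ij ui; apply/eqP; move/forallP/(_ j): (tail i); rewrite ij ui.
- by apply/forallP => i; apply/implyP => /eqP/head/eqP.
- apply/forallP => i; apply/forallP => j; apply/implyP => /andP[ij /eqP ui].
  exact/eqP/(tail i j ij ui).
Qed.

Lemma wleP u v : reflect (forall i, val (u i) <= val (v i)) (wle u v).
Proof. exact: forallP. Qed.

Lemma wle_wsum u v : wle u v -> wsum u <= wsum v.
Proof. by move/wleP => uv; apply: leq_sum => i _. Qed.

Lemma wlt_letter u v : wlt u v -> exists i, val (u i) < val (v i).
Proof.
case/andP=> /wleP uv neq_uv.
suff /existsP[i lt_i] : [exists i, val (u i) < val (v i)] by exists i.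
apply: contraNT neq_uv => /existsPn no_lt; apply/eqP/ffunP => i.
by apply/val_inj/eqP; rewrite eqn_leq uv leqNgt no_lt.
Qed.

Lemma wlt_wsum u v : wlt u v -> wsum u < wsum v.
Proof.
move=> uv; have [i lt_i] := wlt_letter uv; case/andP: uv => /wleP uv _.
rewrite /wsum (bigD1 i) //= [X in _ < X](bigD1 i) //= -addSn.
by apply: leq_add => //; apply: leq_sum => j _; apply: uv.
Qed.

Lemma wle_wsum_eq u v : wle u v -> wsum v <= wsum u -> u = v.
Proof.
move=> uv; apply: contraTeq => neq_uv; rewrite -ltnNge.
by apply: wlt_wsum; rewrite /wlt uv.
Qed.

Lemma wle_wsum_succ u v : wle u v -> wsum v = (wsum u).+1 ->
  forall i, val (v i) <= (val (u i)).+1.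
Proof.
move=> /wleP uv sum_v i; rewrite leqNgt; apply/negP => big_i.
have : (wsum u).+2 <= wsum v.
  rewrite /wsum (bigD1 i) //= [X in _ <= X](bigD1 i) //= -!addSn.
  by apply: leq_add => //; apply: leq_sum => j _; apply: uv.
by rewrite sum_v ltnn.
Qed.

Lemma wsum_set_letter u k c : val c = (val (u k)).+1 ->
  wsum (set_letter u k c) = (wsum u).+1.
Proof.
move=> ck; rewrite /wsum (bigD1 k) //= [X in _ = X.+1](bigD1 k) //= ffunE eqxx ck.
by rewrite addSn; congr (_ + _).+1; apply: eq_bigr => i /negbTE ik; rewrite ffunE ik.
Qed.

Lemma path_cover_wsum x s :
  path (@tr_cover n) x s -> wsum x + size s <= wsum (last x s).
Proof.
elim: s x => [|y s IHs] x /=; first by rewrite addn0.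
by case/andP=> /and4P[_ _ /wlt_wsum xy _] /IHs; lia.
Qed.

Lemma tr_cover_wsum_succ u v : triword u -> triword v -> wle u v ->
  wsum v = (wsum u).+1 -> tr_cover u v.
Proof.
move=> tu tv uv sum_v; rewrite /tr_cover tu tv /wlt uv /=.
have -> /= : u != v by apply/eqP => eq_uv; move: sum_v; rewrite eq_uv; lia.
by apply/existsP => -[w /and3P[_ /wlt_wsum uw /wlt_wsum wv]]; lia.
Qed.

Lemma raise_one_to_two u i c : triword u -> zero_suffix u ->
  val (u i) = 1 -> val i <> 0 -> val c = 2 ->
  triword (set_letter u i c) /\ zero_suffix (set_letter u i c).
Proof.
move=> /triwordP[u_head u_tail] zu ui1 i_gt0 c2.
have val_set j : val (set_letter u i c j) = if j == i then 2 else val (u j).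
  by rewrite ffunE; case: eqP.
split; [apply/triwordP; split|].
- move=> j j0; rewrite val_set; case: eqP => [ji | _]; last exact: u_head.
  by rewrite -ji in i_gt0.
- move=> j k jk; rewrite !val_set; case: eqP => // _ uj0.
  by case: eqP => // _; apply: u_tail jk uj0.
- move=> j k; rewrite !val_set; case: eqP => // _ uj0 jk.
  case: eqP => [ki | _]; last exact: zu uj0 jk.
  by move: (zu _ _ uj0 jk); rewrite ki ui1.
Qed.

Lemma raise_first_zero u k c : triword u -> zero_suffix u ->
  (forall j, val (u j) = 0 -> val k <= val j) -> val c = 1 ->
  triword (set_letter u k c) /\ zero_suffix (set_letter u k c).
Proof.
move=> /triwordP[u_head _] zu k_first c1.
have val_set j : val (set_letter u k c j) = if j == k then 1 else val (u j).
  by rewrite ffunE; case: eqP.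
have zero_after j l :
    j != k -> val (u j) = 0 -> val j <= val l -> l != k /\ val (u l) = 0.
  move=> jk uj0 jl; split; last exact: zu uj0 jl.
  apply: contraNneq jk => lk; apply/eqP/val_inj/eqP.
  by rewrite eqn_leq (k_first _ uj0) -lk jl.
split; [apply/triwordP; split|].
- by move=> j j0; rewrite val_set; case: eqP => // _; apply: u_head.
- move=> j l jl; rewrite !val_set; case: eqP => // /eqP jk uj0.
  by have [/negbTE -> ->] := zero_after j l jk uj0 (ltnW jl).
- move=> j l; rewrite !val_set; case: eqP => // /eqP jk uj0 jl.
  by have [/negbTE -> ->] := zero_after j l jk uj0 jl.
Qed.

Lemma unit_step_between u v :
  triword u -> zero_suffix u -> triword v -> zero_suffix v -> wlt u v ->
  exists w, [/\ triword w, zero_suffix w, wle u w, wle w v & wsum w = (wsum u).+1].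
Proof.
move=> tu zu tv zv uv; have /andP[/wleP le_uv _] := uv.
case/triwordP: tv => v_head _.
have val_inord m : m < 3 -> val (inord m : 'I_3) = m by move=> ?; rewrite /= inordK.
have set_between k m : val (u k) < m -> m <= val (v k) ->
    wle u (set_letter u k (inord m)) /\ wle (set_letter u k (inord m)) v.
  move=> um mv; have m3 : m < 3 by apply: leq_trans (ltn_ord (v k)).
  split; apply/wleP => j; rewrite ffunE; case: eqP => [-> | _] //;
    by rewrite ?val_inord ?le_uv // ltnW.
have [/existsP[i /andP[/eqP ui1 /eqP vi2]] | no12] :=
  boolP [exists i, (val (u i) == 1) && (val (v i) == 2)].
  have i_gt0 : val i <> 0 by move=> /v_head.
  have [tw zw] := raise_one_to_two tu zu ui1 i_gt0 (val_inord 2 isT).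
  have [uw wv] := set_between i 2 (ltac:(by rewrite ui1)) (ltac:(by rewrite vi2)).
  exists (set_letter u i (inord 2)); split=> //.
  by apply: wsum_set_letter; rewrite val_inord // ui1.
have [i lt_i] := wlt_letter uv.
have ui0 : val (u i) = 0.
  move/existsPn/(_ i): no12; move: lt_i; have := ltn_ord (v i); rewrite /=; lia.
case: (arg_minnP val (P := fun k => val (u k) == 0) (introT eqP ui0)).
move=> k /eqP uk0 k_first.
have vk_gt0 : 0 < val (v k).
  rewrite lt0n; apply/eqP => vk0.
  by move: lt_i; rewrite (zv _ _ vk0 (k_first i (introT eqP ui0))) ltn0.
have [tw zw] :=
  raise_first_zero tu zu (fun j uj0 => k_first j (introT eqP uj0)) (val_inord 1 isT).
have [uw wv] := set_between k 1 (ltac:(by rewrite uk0)) vk_gt0.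
exists (set_letter u k (inord 1)); split=> //.
by apply: wsum_set_letter; rewrite val_inord // uk0.
Qed.

Lemma unit_path_between d u v :
  triword u -> zero_suffix u -> triword v -> zero_suffix v -> wle u v ->
  wsum v = wsum u + d ->
  exists s, [/\ path (@tr_cover n) u s, last u s = v & size s = d].
Proof.
elim: d u => [|d IHd] u tu zu tv zv uv sum_v.
  by exists [::]; split=> //=; apply: wle_wsum_eq uv _; rewrite sum_v addn0.
have neq_uv : u != v by apply/eqP => eq_uv; move: sum_v; rewrite eq_uv; lia.
have [w [tw zw uw wv sum_w]] :=
  unit_step_between tu zu tv zv (introT andP (conj uv neq_uv)).
have [s [p_s last_s size_s]] := IHd w tw zw tv zv wv (ltac:(lia)).
by exists (w :: s); rewrite /= p_s last_s size_s tr_cover_wsum_succ.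
Qed.

Lemma unit_step_zero_two x y i j : triword x -> wle x y ->
  wsum y = (wsum x).+1 -> val i < val j -> val (y i) = 0 -> val (y j) = 2 ->
  val (x i) = 0 /\ val (x j) = 2.
Proof.
move=> /triwordP[_ x_tail] xy sum_y ij yi0 yj2.
have xi0 : val (x i) = 0 by move/wleP/(_ i): xy; rewrite yi0 leqn0 => /eqP.
split=> //; have := wle_wsum_succ xy sum_y j; have := x_tail i j ij xi0.
by have := ltn_ord (x j); rewrite yj2 /=; lia.
Qed.

Lemma unit_path_zero_two x s : path (@tr_cover n) x s ->
  wsum (last x s) = wsum x + size s ->
  forall y, y \in x :: s -> forall i j : 'I_n,
  val i < val j -> val (y i) = 0 -> val (y j) = 2 -> val (x i) = 0 /\ val (x j) = 2.
Proof.
elim: s x => [|x' s IHs] x /=; first by move=> _ _ y; rewrite inE => /eqP ->.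
case/andP=> /and4P[tx _ /[dup] /wlt_wsum xx' /andP[le_xx' _] _] p_s sum_s y.
have := path_cover_wsum p_s; rewrite inE => sum_s'.
case/predU1P=> [-> // | y_s] i j ij yi0 yj2.
have [xi0 xj2] := IHs x' p_s (ltac:(lia)) y y_s i j ij yi0 yj2.
by apply: unit_step_zero_two tx le_xx' (ltac:(lia)) ij xi0 xj2.
Qed.

Lemma val_tr_top (i : 'I_n) : val (tr_top n i) = if val i == 0 then 1 else 2.
Proof. by rewrite ffunE; case: ifP; rewrite /= inordK. Qed.

Lemma triword_bot : triword (tr_bot n).
Proof. by apply/triwordP; split=> *; rewrite ffunE. Qed.

Lemma zero_suffix_bot : zero_suffix (tr_bot n).
Proof. by move=> i j; rewrite !ffunE. Qed.

Lemma triword_top : triword (tr_top n).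
Proof. by apply/triwordP; split=> [i | i j _]; rewrite val_tr_top; case: eqP. Qed.

Lemma zero_suffix_top : zero_suffix (tr_top n).
Proof. by move=> i j; rewrite val_tr_top; case: ifP. Qed.

Lemma wle_bot u : wle (tr_bot n) u.
Proof. by apply/wleP => i; rewrite ffunE. Qed.

Lemma wle_top u : triword u -> wle u (tr_top n).
Proof.
move=> /triwordP[u_head _]; apply/wleP => i; rewrite val_tr_top.
case: eqP => [/u_head | _]; have := ltn_ord (u i); rewrite /=; lia.
Qed.

Lemma wsum_bot : wsum (tr_bot n) = 0.
Proof. by apply: big1 => i _; rewrite ffunE. Qed.

Lemma sat_chain_size s : sat_chain s -> size s <= wsum (tr_top n).
Proof. by case=> p_s <-; have := path_cover_wsum p_s; rewrite wsum_bot. Qed.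

Lemma sat_chain_through u : triword u -> zero_suffix u ->
  exists s, [/\ sat_chain s, size s = wsum (tr_top n) & u \in tr_bot n :: s].
Proof.
move=> tu zu; have le_top := wle_top tu; have le_sum := wle_wsum le_top.
have sum_u : wsum u = wsum (tr_bot n) + wsum u by rewrite wsum_bot.
have [s1 [p_s1 last_s1 size_s1]] :=
  unit_path_between triword_bot zero_suffix_bot tu zu (wle_bot u) sum_u.
have [s2 [p_s2 last_s2 size_s2]] :=
  unit_path_between tu zu triword_top zero_suffix_top le_top (esym (subnKC le_sum)).
exists (s1 ++ s2); split.
- by rewrite /sat_chain cat_path last_cat last_s1 p_s1 p_s2.
- by rewrite size_cat size_s1 size_s2 subnKC.
- by rewrite -cat_cons mem_cat -last_s1 mem_last.
Qed.

Lemma longest_sat_chain_size s : longest_sat_chain s -> size s = wsum (tr_top n).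
Proof.
case=> sat_s max_s.
have [t [sat_t size_t _]] := sat_chain_through triword_bot zero_suffix_bot.
by apply/eqP; rewrite eqn_leq sat_chain_size // -size_t max_s.
Qed.

Lemma longest_sat_chain_zero_suffix s u :
  longest_sat_chain s -> u \in tr_bot n :: s -> triword u -> zero_suffix u.
Proof.
move=> long_s u_s /triwordP[_ u_tail] i j ui0; rewrite leq_eqVlt.
case/predU1P => [/val_inj <- // | ij].
have [[p_s last_s] _] := long_s.
have unit_s : wsum (last (tr_bot n) s) = wsum (tr_bot n) + size s.
  by rewrite last_s wsum_bot longest_sat_chain_size.
have uj_ne2 : val (u j) <> 2.
  move=> uj2; have [_] := unit_path_zero_two p_s unit_s u_s ij ui0 uj2.
  by rewrite ffunE.
by move: uj_ne2 (u_tail i j ij ui0) (ltn_ord (u j)); rewrite /=; lia.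
Qed.

End Triwords.

Lemma wsum_top n : 0 < n -> wsum (tr_top n) = 2 * n - 1.
Proof.
case: n => // m _; rewrite /wsum big_ord_recl val_tr_top /=.
rewrite (eq_bigr (fun _ => 2)) => [|i _]; last by rewrite val_tr_top.
by rewrite sum_nat_const card_ord; lia.
Qed.

Theorem lemma3p1 (n : nat) (hn : 0 < n) :
  (forall s : seq (word n), longest_sat_chain s -> size s = 2 * n - 1) /\
  (forall u : word n, triword u ->
     ((exists s : seq (word n), longest_sat_chain s /\ u \in tr_bot n :: s) <->
      (forall i j : 'I_n, val (u i) = 0 -> val i <= val j -> val (u j) = 0))).
Proof.
split=> [s /longest_sat_chain_size | u tu]; first by rewrite wsum_top.
split=> [[s [long_s u_s]] | zu]; first exact: longest_sat_chain_zero_suffix long_s u_s tu.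
have [s [sat_s size_s u_s]] := sat_chain_through tu zu.
by exists s; split=> //; split=> // t /sat_chain_size; rewrite size_s.
Qed.
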